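(* Let $f=(a,b,c,d)$ be a reduced binary cubic form over $\mathbb{F}_q[t]$ of discriminant $D$ with imaginary or unusual Hessian $(P,Q,R)$. Then $|a|\le|D|^{1/4}$, $|b|\le|D|^{1/4}$, $|bc|\le|D|^{1/2}$ and $|ad|\le|D|^{1/2}$.
   Context: $\mathbb{F}_q$ is a finite field with $\gcd(q,6)=1$; $|H|=q^{\deg H}$ for nonzero $H\in\mathbb{F}_q[t]$, $|0|=0$, $\mathrm{sgn}(H)$ = leading coefficient. A binary cubic form $(a,b,c,d)=ax^3+bx^2y+cxy^2+dy^3$ over $\mathbb{F}_q[t]$ has discriminant $D=18abcd+b^2c^2-4ac^3-4b^3d-27a^2d^2$ and Hessian $H_f=(P,Q,R)$, $P=b^2-3ac$, $Q=bc-9ad$, $R=c^2-3bd$, of discriminant $-3D$. $\Delta$ is imaginary if $\deg\Delta$ odd, unusual if $\deg\Delta$ even and $\mathrm{sgn}(\Delta)$ a non-square in $\mathbb{F}_q^*$. Fix a primitive root $h$ of $\mathbb{F}_q^*$, $S=\{h^i:0\le i\le (q-3)/2\}$; assume $\mathrm{sgn}(-3D)\in\{1,h\}$ and $f$ primitive, irreducible. A binary quadratic form $(A,B,C)$ is partially reduced if $|B|<|A|\le|C|$; if $|A|<|C|$ then $\mathrm{sgn}(A)\in\{1,h\}$, if $|A|=|C|$ then $\mathrm{sgn}(A)=1$; and $B\ne0$ implies $\mathrm{sgn}(B)\in S$; it is reduced if partially reduced and either $|A|<|C|$ or it is lexicographically smallest among partially reduced forms in its equivalence class (equivalence via matrices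 over $\mathbb{F}_q[t]$ with determinant in $\mathbb{F}_q^*$, acting by $(f\circ M)(x,y)=f(\alpha x+\beta y,\gamma x+\delta y)$). A cubic form $f$ is reduced if $H_f$ is reduced, $\mathrm{sgn}(a)\in S$, $Q=0$ implies $\mathrm{sgn}(d)\in S$, and, when $H_f$ is unusual, $f$ is lexicographically smallest among all equivalent cubic forms with the same Hessian satisfying these conditions. *)

From HB Require Import structures.
From mathcomp Require Import all_boot all_order all_algebra.
Set Implicit Arguments. Unset Strict Implicit. Unset Printing Implicit Defensive.
Import Order.TTheory GRing.Theory Num.Theory.
Local Open Scope ring_scope.

Section Defs.
Variable F : finFieldType.
Local Notation P := {poly F}.

Definition absv (p : P) : nat := if p == 0 then 0%N else (#|F| ^ (size p).-1)%N.
Definition sgn (p : P) : F := lead_coef p.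

Definition inS (h x : F) : Prop :=
  exists i : nat, (i <= (#|F| - 3)./2)%N /\ x = h ^+ i.

Definition disc (a b c d : P) : P :=
  18%:R * a * b * c * d + b ^+ 2 * c ^+ 2 - 4%:R * a * c ^+ 3
  - 4%:R * b ^+ 3 * d - 27%:R * a ^+ 2 * d ^+ 2.
Definition hessP (a b c d : P) : P := b ^+ 2 - 3%:R * a * c.
Definition hessQ (a b c d : P) : P := b * c - 9%:R * a * d.
Definition hessR (a b c d : P) : P := c ^+ 2 - 3%:R * b * d.
Definition hess (a b c d : P) : P * P * P := (hessP a b c d, hessQ a b c d, hessR a b c d).

Definition qdisc (A B C : P) : P := B ^+ 2 - 4%:R * A * C.

Definition imaginary (D : P) : Prop := D != 0 /\ odd (size D).-1.
Definition unusual (D : P) : Prop :=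
  D != 0 /\ ~~ odd (size D).-1 /\ ~ (exists s : F, s ^+ 2 = lead_coef D).

(* action (f o M)(x,y) = f(al x + be y, ga x + de y) *)
Definition qact (A B C al be ga de : P) : P * P * P :=
  (A * al ^+ 2 + B * al * ga + C * ga ^+ 2,
   2%:R * A * al * be + B * (al * de + be * ga) + 2%:R * C * ga * de,
   A * be ^+ 2 + B * be * de + C * de ^+ 2).
Definition cact (a b c d al be ga de : P) : P * P * P * P :=
  (a * al ^+ 3 + b * al ^+ 2 * ga + c * al * ga ^+ 2 + d * ga ^+ 3,
   3%:R * a * al ^+ 2 * be + b * (al ^+ 2 * de + 2%:R * al * be * ga)
     + c * (2%:R * al * ga * de + be * ga ^+ 2) + 3%:R * d * ga ^+ 2 * de,
   3%:R * a * al * be ^+ 2 + b * (2%:R * al * be * de + be ^+ 2 * ga)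
     + c * (al * de ^+ 2 + 2%:R * be * ga * de) + 3%:R * d * ga * de ^+ 2,
   a * be ^+ 3 + b * be ^+ 2 * de + c * be * de ^+ 2 + d * de ^+ 3).

Definition admissible (al be ga de : P) : Prop :=
  exists u : F, u != 0 /\ al * de - be * ga = u%:P.

Definition qequiv (f g : P * P * P) : Prop :=
  exists al be ga de, admissible al be ga de /\ g = qact f.1.1 f.1.2 f.2 al be ga de.
Definition cequiv (f g : P * P * P * P) : Prop :=
  exists al be ga de, admissible al be ga de /\
    g = cact f.1.1.1 f.1.1.2 f.1.2 f.2 al be ga de.

(* Elements of F_q: 0 < h^0 < h^1 < ... < h^(q-2);
   polynomials: first by degree, then by coefficients from the leading one
   down; forms: lexicographically on the coefficient tuples. *)
Definition keyF (h x : F) : nat :=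
  if x == 0 then 0%N else (find (fun i => h ^+ i == x) (iota 0 #|F|)).+1.
Fixpoint lexlt (s t : seq nat) : bool :=
  match s, t with
  | x :: s', y :: t' => (x < y)%N || ((x == y) && lexlt s' t')
  | _, _ => false
  end.
Definition polylt (h : F) (p q : P) : bool :=
  (size p < size q)%N ||
  ((size p == size q) && lexlt (map (keyF h) (rev p)) (map (keyF h) (rev q))).
Definition qle (h : F) (f g : P * P * P) : Prop :=
  f = g \/ polylt h f.1.1 g.1.1 \/
  (f.1.1 = g.1.1 /\ (polylt h f.1.2 g.1.2 \/ (f.1.2 = g.1.2 /\ polylt h f.2 g.2))).
Definition cle (h : F) (f g : P * P * P * P) : Prop :=
  f = g \/ polylt h f.1.1.1 g.1.1.1 \/
  (f.1.1.1 = g.1.1.1 /\ (polylt h f.1.1.2 g.1.1.2 \/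
  (f.1.1.2 = g.1.1.2 /\ (polylt h f.1.2 g.1.2 \/
  (f.1.2 = g.1.2 /\ polylt h f.2 g.2))))).

Definition partially_reduced (h : F) (A B C : P) : Prop :=
  [/\ (absv B < absv A)%N, (absv A <= absv C)%N,
      ((absv A < absv C)%N -> sgn A = 1 \/ sgn A = h),
      (absv A = absv C -> sgn A = 1) &
      (B != 0 -> inS h (sgn B))].

Definition qreduced (h : F) (A B C : P) : Prop :=
  partially_reduced h A B C /\
  ((absv A < absv C)%N \/
   forall A' B' C', qequiv (A, B, C) (A', B', C') ->
     partially_reduced h A' B' C' -> qle h (A, B, C) (A', B', C')).

Definition cubic_cond (h : F) (a b c d : P) : Prop :=
  let: (P0, Q0, R0) := hess a b c d in
  qreduced h P0 Q0 R0 /\ inS h (sgn a) /\ (Q0 = 0 -> inS h (sgn d)).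

Definition creduced (h : F) (a b c d : P) : Prop :=
  cubic_cond h a b c d /\
  let: (P0, Q0, R0) := hess a b c d in
  (unusual (qdisc P0 Q0 R0) ->
   forall a' b' c' d', cequiv (a, b, c, d) (a', b', c', d') ->
     hess a' b' c' d' = hess a b c d -> cubic_cond h a' b' c' d' ->
     cle h (a, b, c, d) (a', b', c', d')).

Definition primitive_form (a b c d : P) : Prop :=
  size (gcdp (gcdp a b) (gcdp c d)) = 1%N.

(* irreducible over F_q(t): f(x,y) = y^3 f(x/y,1) with a != 0 and
   a X^3 + b X^2 + c X + d irreducible in F_q(t)[X] *)
Definition irreducible_form (a b c d : P) : Prop :=
  a != 0 /\
  irreducible_poly (Poly [:: FracField.tofrac d; FracField.tofrac c;
                             FracField.tofrac b; FracField.tofrac a]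
                    : {poly {fraction P}}).

End Defs.

From HB Require Import structures.
From mathcomp Require Import all_boot all_order all_algebra all_field.
From mathcomp Require Import ring zify.
Import GRing.Theory.
Set Implicit Arguments. Unset Strict Implicit. Unset Printing Implicit Defensive.
Local Open Scope ring_scope.

(* The Hessian H = (P, Q, R) is a quadratic covariant of f with
   H(b, -3a) = P^2 and H(3d, -c) = R^2.  Since disc H = -3D is imaginary or
   unusual, the value H(x, y) has no cancellation: the terms P x^2 and R y^2
   have the same degree only if deg P + deg R is even, and then their leading
   coefficients cancel only if -4 sgn(P) sgn(R) = sgn(disc H) is a square;
   the middle term Q x y is smaller because |Q| < |P| <= |R|.  Hence
   |R| |a|^2 <= |P|^2, |b|^2 <= |P|, |P| |d|^2 <= |R|^2 and |c|^2 <= |R|,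
   and |D| = |P| |R| turns these into the claimed bounds. *)

Lemma pchar_dvdn_card (R : finNzRingType) p : p \in [pchar R] -> (p %| #|R|)%N.
Proof.
move=> pRp; have cardR : #|R| = (p ^ logn p #|R|)%N := card_pprimeChar pRp.
have : (0 < logn p #|R|)%N.
  by rewrite lt0n; apply: contraTneq (finNzRing_gt1 R) => lg0; rewrite cardR lg0.
by case: (logn p #|R|) cardR => // n -> _; rewrite expnS dvdn_mulr.
Qed.

Lemma natr_neq0_coprime (F : finFieldType) p :
  prime p -> coprime #|F| p -> p%:R != 0 :> F.
Proof.
move=> pr_p cop; apply/eqP => p0.
have : (p %| gcdn #|F| p)%N by rewrite dvdn_gcd dvdnn pchar_dvdn_card // inE pr_p p0 eqxx.
by rewrite (eqP cop) dvdn1 => /eqP p1; rewrite p1 in pr_p.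
Qed.

Lemma opp4_mul_eq_sqr (K : fieldType) (p r x y : K) : x != 0 ->
  p * x ^+ 2 + r * y ^+ 2 = 0 -> - (4%:R * p * r) = (2%:R * r * y / x) ^+ 2.
Proof.
move=> x0 /eqP; rewrite addr_eq0 => /eqP pxE.
have -> : p = - (r * y ^+ 2) / x ^+ 2 by rewrite -pxE mulfK // expf_neq0.
by field.
Qed.

Section PolySize.
Variable R : idomainType.
Implicit Types p q r u v x y : {poly R}.

Lemma size_addr_eq u v : size u = size v ->
  lead_coef u + lead_coef v != 0 -> size (u + v) = size u.
Proof.
move=> uv luv; apply/eqP; rewrite eqn_leq; apply/andP; split.
  by rewrite (leq_trans (size_polyD _ _)) // -uv maxnn.
have u0 : u != 0.
  apply: contraNneq luv => u0; move/eqP: uv.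
  by rewrite u0 size_poly0 eq_sym size_poly_eq0 => /eqP->; rewrite lead_coef0 addr0.
rewrite leqNgt (polySpred u0) ltnS; apply: contra luv => /leq_sizeP/(_ _ (leqnn _)).
by rewrite coefD -lead_coefE uv -lead_coefE => ->.
Qed.

Lemma size_mul_sqr p x : p != 0 -> x != 0 ->
  size (p * x ^+ 2) = (size p + (size x).*2).-2.
Proof. by move=> p0 x0; rewrite expr2 !size_mul ?mulf_neq0 //; have := polySpred x0; lia. Qed.

Lemma deg_mul_even_of_size_eq p r x y : p != 0 -> r != 0 -> x != 0 -> y != 0 ->
  size (p * x ^+ 2) = size (r * y ^+ 2) -> ~~ odd (size (p * r)).-1.
Proof.
move=> p0 r0 x0 y0; rewrite !size_mul_sqr // size_mul // => e.
have := polySpred p0; have := polySpred r0.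
have := polySpred x0; have := polySpred y0 => gy gx gr gp.
have -> : (size p + size r).-1.-1 = (size p + size x - size y - 1).*2 by lia.
by rewrite odd_double.
Qed.

Lemma size_sqr_lt_mul p q r : (size q < size p)%N -> (size p <= size r)%N ->
  (size (q ^+ 2)%R < size (p * r)%R)%N.
Proof.
move=> qp pr; have p0 : p != 0 by rewrite -size_poly_gt0 (leq_ltn_trans _ qp).
have r0 : r != 0 by rewrite -size_poly_gt0 (leq_trans _ pr) // (leq_ltn_trans _ qp).
have := polySpred p0; have := polySpred r0 => gr gp.
rewrite size_mul //; have [->|q0] := eqVneq q 0; first by rewrite expr2 mul0r size_poly0; lia.
by rewrite expr2 size_mul //; lia.
Qed.

Lemma size_mul_lt_max p q r x y : (size q < size p)%N -> (size p <= size r)%N ->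
  q * x * y != 0 ->
  (size (q * x * y)%R < maxn (size (p * x ^+ 2)%R) (size (r * y ^+ 2)%R))%N.
Proof.
move=> qp pr; rewrite !mulf_eq0 !negb_or => /andP[/andP[q0 x0] y0].
have p0 : p != 0 by rewrite -size_poly_gt0 (leq_ltn_trans _ qp).
have r0 : r != 0 by rewrite -size_poly_gt0 (leq_trans _ pr) // (leq_ltn_trans _ qp).
rewrite !size_mul_sqr // !size_mul ?mulf_neq0 //.
have := polySpred q0; have := polySpred x0; have := polySpred y0.
move=> gy gx gq; rewrite leq_max; apply/orP; lia.
Qed.
End PolySize.

Section Absv.
Variable F : finFieldType.
Implicit Types p r : {poly F}.

Lemma leq_absv p r : (absv p <= absv r)%N = (size p <= size r)%N.
Proof.
rewrite /absv; have q_gt1 := finNzRing_gt1 F.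
have [->|p0] := eqVneq p 0; first by rewrite size_poly0.
have [->|r0] := eqVneq r 0.
  by rewrite size_poly0 !leqn0 size_poly_eq0 (negbTE p0) expn_eq0 (gtn_eqF (ltnW q_gt1)).
by rewrite leq_exp2l // (polySpred p0) (polySpred r0).
Qed.

Lemma ltn_absv p r : (absv p < absv r)%N = (size p < size r)%N.
Proof. by rewrite !ltnNge leq_absv. Qed.

Lemma eq_absv p r : size p = size r -> absv p = absv r.
Proof. by move=> e; apply/eqP; rewrite eqn_leq !leq_absv e leqnn. Qed.

Lemma absvM p r : absv (p * r) = (absv p * absv r)%N.
Proof.
rewrite /absv; have [->|p0] := eqVneq p 0; first by rewrite mul0r eqxx.
have [->|r0] := eqVneq r 0; first by rewrite mulr0 eqxx muln0.
rewrite mulf_eq0 (negbTE p0) (negbTE r0) size_mul // -expnD.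
move: p0 r0; rewrite -!size_poly_gt0.
by case: (size p) => // m _; case: (size r) => // n _; rewrite addSn addnS.
Qed.

Lemma absvX p n : absv (p ^+ n) = (absv p ^ n)%N.
Proof.
elim: n => [|n IHn]; last by rewrite exprS absvM IHn expnS.
by rewrite expr0 /absv oner_eq0 size_poly1.
Qed.

Lemma absvCM (k : F) p : k != 0 -> absv (k%:P * p) = absv p.
Proof. by move=> k0; apply: eq_absv; rewrite size_Cmul. Qed.

End Absv.

Section QuadraticForms.
Variable F : finFieldType.
Implicit Types A B C x y : {poly F}.

Definition qform_eval A B C x y := A * x ^+ 2 + B * x * y + C * y ^+ 2.

Hypothesis two_neq0 : 2%:R != 0 :> F.

Let four_neq0 : 4%:R != 0 :> F.
Proof. by rewrite (natrM _ 2 2) mulf_neq0. Qed.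

Section PartiallyReducedShape.
Variables A B C : {poly F}.
Hypotheses (BA : (size B < size A)%N) (AC : (size A <= size C)%N).

Let A_neq0 : A != 0. Proof. by rewrite -size_poly_gt0 (leq_ltn_trans _ BA). Qed.
Let C_neq0 : C != 0.
Proof. by rewrite -size_poly_gt0 (leq_trans _ AC) // (leq_ltn_trans _ BA). Qed.

Let qdisc_split : qdisc A B C = B ^+ 2 + (- 4%:R)%:P * (A * C).
Proof. by rewrite /qdisc polyCN polyC_natr; ring. Qed.

Let size_sqr_lt : (size (B ^+ 2)%R < size ((- 4%:R)%:P * (A * C))%R)%N.
Proof. by rewrite size_Cmul ?oppr_eq0 //; apply: size_sqr_lt_mul. Qed.

Lemma size_qdisc : size (qdisc A B C) = size (A * C).
Proof. by rewrite qdisc_split addrC size_polyDl // size_Cmul ?oppr_eq0. Qed.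

Lemma lead_coef_qdisc : lead_coef (qdisc A B C) = - (4%:R * lead_coef A * lead_coef C).
Proof. by rewrite qdisc_split addrC lead_coefDl // !lead_coefM lead_coefC mulNr mulrA. Qed.

Hypothesis AC_imag_or_unusual : imaginary (qdisc A B C) \/ unusual (qdisc A B C).

Lemma lead_coef_add_sqr_neq0 x y : x != 0 -> y != 0 ->
  size (A * x ^+ 2) = size (C * y ^+ 2) ->
  lead_coef (A * x ^+ 2) + lead_coef (C * y ^+ 2) != 0.
Proof.
move=> x0 y0 eq_size.
have even_AC := deg_mul_even_of_size_eq A_neq0 C_neq0 x0 y0 eq_size.
case: AC_imag_or_unusual => [[_]|[_ [_ nonsquare]]].
  by rewrite size_qdisc (negbTE even_AC).
apply/eqP => cancel; apply: nonsquare.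
exists (2%:R * lead_coef C * lead_coef y / lead_coef x).
rewrite [lead_coef (A * _)]lead_coefM [lead_coef (C * _)]lead_coefM !lead_coef_exp in cancel.
by rewrite lead_coef_qdisc (opp4_mul_eq_sqr _ cancel) // lead_coef_eq0.
Qed.

Lemma size_add_sqr x y :
  size (A * x ^+ 2 + C * y ^+ 2) = maxn (size (A * x ^+ 2)) (size (C * y ^+ 2)).
Proof.
have [->|x0] := eqVneq x 0; first by rewrite expr0n mulr0 add0r size_poly0 max0n.
have [->|y0] := eqVneq y 0; first by rewrite expr0n mulr0 addr0 size_poly0 maxn0.
case: (ltngtP (size (A * x ^+ 2)) (size (C * y ^+ 2))) => [lt|gt|eq].
- by rewrite addrC size_polyDl // (maxn_idPr (ltnW lt)).
- by rewrite size_polyDl // (maxn_idPl (ltnW gt)).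
- by rewrite size_addr_eq ?lead_coef_add_sqr_neq0 // eq maxnn.
Qed.

Lemma size_qform_eval x y :
  size (qform_eval A B C x y) = maxn (size (A * x ^+ 2)) (size (C * y ^+ 2)).
Proof.
rewrite /qform_eval -addrA (addrC (B * x * y)) addrA.
have [->|Bxy0] := eqVneq (B * x * y) 0; first by rewrite addr0 size_add_sqr.
by rewrite size_polyDl size_add_sqr // size_mul_lt_max.
Qed.

End PartiallyReducedShape.
End QuadraticForms.

Section Hessian.
Variable F : finFieldType.
Variables a b c d : {poly F}.
Local Notation hP := (hessP a b c d).
Local Notation hQ := (hessQ a b c d).
Local Notation hR := (hessR a b c d).

Lemma qform_eval_hess_b : qform_eval hP hQ hR b (- (3%:R * a)) = hP ^+ 2.
Proof. by rewrite /qform_eval /hessP /hessQ /hessR; ring. Qed.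

Lemma qform_eval_hess_d : qform_eval hP hQ hR (3%:R * d) (- c) = hR ^+ 2.
Proof. by rewrite /qform_eval /hessP /hessQ /hessR; ring. Qed.

Lemma qdisc_hess : qdisc hP hQ hR = - 3%:R * disc a b c d.
Proof. by rewrite /qdisc /disc /hessP /hessQ /hessR; ring. Qed.

Hypotheses (two_neq0 : 2%:R != 0 :> F) (three_neq0 : 3%:R != 0 :> F).
Hypotheses (QP : (size hQ < size hP)%N) (PR : (size hP <= size hR)%N).

Lemma absv_disc : absv (disc a b c d) = (absv hP * absv hR)%N.
Proof.
have minus3_neq0 : - 3%:R != 0 :> F by rewrite oppr_eq0.
rewrite -absvM -(absvCM _ minus3_neq0) polyCN polyC_natr -qdisc_hess.
by apply: eq_absv; rewrite size_qdisc.
Qed.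

Hypothesis hess_imag_or_unusual : imaginary (qdisc hP hQ hR) \/ unusual (qdisc hP hQ hR).

Lemma absv_hess_bounds :
  [/\ (absv hR * absv a ^ 2 <= absv hP ^ 2)%N, (absv hP * absv b ^ 2 <= absv hP ^ 2)%N,
      (absv hP * absv d ^ 2 <= absv hR ^ 2)%N & (absv hR * absv c ^ 2 <= absv hR ^ 2)%N].
Proof.
have size_b := size_qform_eval two_neq0 QP PR hess_imag_or_unusual b (- (3%:R * a)).
have size_d := size_qform_eval two_neq0 QP PR hess_imag_or_unusual (3%:R * d) (- c).
rewrite qform_eval_hess_b in size_b; rewrite qform_eval_hess_d in size_d.
have absv_3a : absv (- (3%:R * a)) = absv a.
  by rewrite -mulNr -polyC_natr -polyCN absvCM // oppr_eq0.
have absv_3d : absv (3%:R * d) = absv d by rewrite -polyC_natr absvCM.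
have absv_c : absv (- c) = absv c by apply: eq_absv; rewrite size_polyN.
rewrite -absv_3a -absv_3d -absv_c -!absvX -!absvM !leq_absv size_b size_d.
by rewrite leq_maxl leq_maxr leq_maxl leq_maxr.
Qed.

End Hessian.

Section NatBounds.
Local Open Scope nat_scope.

Lemma coef_bounds_of_value_bounds (p r A B C D : nat) : 0 < p -> p <= r ->
  r * A ^ 2 <= p ^ 2 -> p * B ^ 2 <= p ^ 2 ->
  p * D ^ 2 <= r ^ 2 -> r * C ^ 2 <= r ^ 2 ->
  [/\ A ^ 4 <= p * r, B ^ 4 <= p * r, (B * C) ^ 2 <= p * r
    & (A * D) ^ 2 <= p * r].
Proof.
move=> p0 pr hA hB hD hC; have r0 : 0 < r by apply: leq_trans pr.
have {}hB : B ^ 2 <= p by rewrite -(leq_pmul2l p0) mulnn.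
have {}hC : C ^ 2 <= r by rewrite -(leq_pmul2l r0) mulnn.
have sqr4 n : n ^ 4 = (n ^ 2) ^ 2 by rewrite -expnM.
split.
- have r2 : 0 < r ^ 2 by rewrite expn_gt0 r0.
  rewrite -(leq_pmul2l r2) sqr4 -expnMn (leq_trans (_ : _ <= (p ^ 2) ^ 2)) ?leq_exp2r //.
  by rewrite -sqr4 (expnS p 3) mulnCA -expnSr leq_mul // leq_exp2r.
- by rewrite sqr4 (leq_trans (leq_mul hB hB)) // mulnn leq_mul.
- by rewrite expnMn leq_mul.
- have pr0 : 0 < p * r by rewrite muln_gt0 p0.
  rewrite -(leq_pmul2l pr0) [p * r]mulnC expnMn mulnACA (leq_trans (leq_mul hA hD)) //.
  by rewrite mulnACA !mulnn mulnC.
Qed.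

End NatBounds.

Theorem mainTheorem10 (F : finFieldType) (h : F) (a b c d : {poly F}) :
  coprime #|F| 6 ->
  (#|F|.-1).-primitive_root h ->
  (sgn (- 3%:R * disc a b c d) = 1 \/ sgn (- 3%:R * disc a b c d) = h) ->
  primitive_form a b c d ->
  irreducible_form a b c d ->
  creduced h a b c d ->
  (imaginary (qdisc (hessP a b c d) (hessQ a b c d) (hessR a b c d)) \/
   unusual (qdisc (hessP a b c d) (hessQ a b c d) (hessR a b c d))) ->
  [/\ (absv a ^ 4 <= absv (disc a b c d))%N,
      (absv b ^ 4 <= absv (disc a b c d))%N,
      (absv (b * c) ^ 2 <= absv (disc a b c d))%N &
      (absv (a * d) ^ 2 <= absv (disc a b c d))%N].
Proof.
move=> cop6 _ _ _ _ [hred _] hD; move: hred; rewrite /cubic_cond /hess /=.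
case=> [[[QP PR _ _ _] _] _].
have P_gt0 : (0 < absv (hessP a b c d))%N by apply: leq_ltn_trans QP.
move: cop6; rewrite (coprimeMr _ 2 3) => /andP[cop2 cop3].
have two_neq0 := natr_neq0_coprime (isT : prime 2) cop2.
have three_neq0 := natr_neq0_coprime (isT : prime 3) cop3.
rewrite ltn_absv in QP; rewrite leq_absv in PR.
have [Ba Bb Bd Bc] := absv_hess_bounds two_neq0 three_neq0 QP PR hD.
rewrite absv_disc // !absvM.
by apply: coef_bounds_of_value_bounds; rewrite // leq_absv.
Qed.
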